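(* Let $Q=\{[\bar x]\in\mathbb P^3(\mathbb K):\bar x\cdot\bar x=0\}$. Let $a,b,c\in\mathbb P^3(\mathbb K)\setminus Q$, suppose $a\notin\{b\}\cup b^\perp$, and suppose $\gamma_c\gamma_a$ commutes with $\gamma_b\gamma_c$. Then $c\in\ell\cup\ell^\perp$, where $\ell$ is the line spanned by $a$ and $b$.
   Context: $\mathbb K$ is an algebraically closed field of characteristic 0 (an ultrapower of $\mathbb C$), and $\cdot$ is the standard bilinear form $\bar x\cdot\bar y=\sum_{i<4}x_iy_i$ on $\mathbb K^4$. For a projective subspace $P\subseteq\mathbb P^3$ with lift $\tilde P\le\mathbb K^4$, $P^\perp$ is the projective subspace whose lift is $\tilde P^\perp=\{w:w\cdot v=0\ \forall v\in\tilde P\}$. For $x\in\mathbb P^3\setminus Q$, $\gamma_x:Q\to Q$ is the involution defined by collinearity with $x$: for $y\in Q$ the line through $x,y$ meets $Q$ in the divisor $y+\gamma_x(y)$; equivalently $\gamma_x$ is the restriction to $Q$ of the projectivisation of the linear map which is $-1$ on $\tilde x$ and the identity on $\tilde x^\perp$. Composition is written by juxtaposition. *)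

From HB Require Import structures.
From mathcomp Require Import all_boot all_order all_algebra.
Set Implicit Arguments. Unset Strict Implicit. Unset Printing Implicit Defensive.
Import GRing.Theory.
Local Open Scope ring_scope.

(* Vectors of K^4 (lifts of points of P^3(K)) are row vectors 'rV[K]_4.
   A point of P^3 is represented by a nonzero vector; two nonzero vectors
   represent the same point iff they are proportional. *)

Definition dot4 (K : fieldType) (x y : 'rV[K]_4) : K :=
  \sum_(i < 4) x 0 i * y 0 i.

Definition projeq (K : fieldType) (u v : 'rV[K]_4) : Prop :=
  exists k : K, k != 0 /\ u = k *: v.

Definition onQ (K : fieldType) (y : 'rV[K]_4) : Prop :=
  y != 0 /\ dot4 y y = 0.

(* the linear map which is -1 on <x> and the identity on x^perp
   (well defined for x . x <> 0); gamma_x is its projectivisation on Q *)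
Definition gammaLin (K : fieldType) (x : 'rV[K]_4) (v : 'rV[K]_4) : 'rV[K]_4 :=
  v - ((2%:R * dot4 v x) / dot4 x x) *: x.

Definition eqOnQ (K : fieldType) (f g : 'rV[K]_4 -> 'rV[K]_4) : Prop :=
  forall y, onQ y -> projeq (f y) (g y).

Definition in_span2 (K : fieldType) (a b c : 'rV[K]_4) : Prop :=
  exists s t : K, c = s *: a + t *: b.

Definition in_perp2 (K : fieldType) (a b c : 'rV[K]_4) : Prop :=
  dot4 c a = 0 /\ dot4 c b = 0.

(* Let T := gamma_a gamma_b gamma_c, as a linear map of K^4.  The commutation
   hypothesis says exactly that every isotropic vector is an eigenvector of T^2.
   With i^2 = -1, the isotropic vectors e_0 +- i e_1, e_2 +- i e_3 form a basis,
   and a vector of the first pair plus one of the second is again isotropic; so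
   all four eigenvalues agree and T^2 is a scalar, which is 1 because T fixes a
   nonzero vector orthogonal to a, b, c.  If c is not on the line ab, pick v
   orthogonal to a and b with v.c <> 0: then T v = T^-1 v = gamma_c v, and
   comparing c-components gives gamma_a gamma_b c = c, i.e.
   gamma_a c = gamma_b c.  Since a and b are independent, c.a = c.b = 0. *)

From HB Require Import structures.
From mathcomp Require Import all_boot all_order all_algebra.
From mathcomp Require Import ring.
Set Implicit Arguments. Unset Strict Implicit. Unset Printing Implicit Defensive.
Import GRing.Theory.
Local Open Scope ring_scope.

Section Dot4.
Variable K : fieldType.
Implicit Types u v w : 'rV[K]_4.

Lemma dot4E u v : dot4 u v = (u *m v^T) 0 0.
Proof. by rewrite /dot4 mxE; apply: eq_bigr => j _; rewrite mxE. Qed.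

Lemma dot4C u v : dot4 u v = dot4 v u.
Proof. by rewrite /dot4; apply: eq_bigr => j _; rewrite mulrC. Qed.

Lemma dot4Dl u v w : dot4 (u + v) w = dot4 u w + dot4 v w.
Proof. by rewrite /dot4 -big_split; apply: eq_bigr => j _; rewrite mxE mulrDl. Qed.

Lemma dot4Zl k u v : dot4 (k *: u) v = k * dot4 u v.
Proof. by rewrite /dot4 mulr_sumr; apply: eq_bigr => j _; rewrite mxE mulrA. Qed.

Lemma dot4_delta p v : dot4 (delta_mx 0 p) v = v 0 p.
Proof. by rewrite dot4E -rowE !mxE. Qed.

Lemma isotropicD u v :
  dot4 u u = 0 -> dot4 v v = 0 -> dot4 u v = 0 -> dot4 (u + v) (u + v) = 0.
Proof.
move=> uu vv uv; rewrite !dot4Dl ![dot4 _ (u + v)]dot4C !dot4Dl.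
by rewrite uu vv uv dot4C uv !addr0.
Qed.

Lemma mulmx_tr_eq0 u v : (u *m v^T == 0) = (dot4 u v == 0).
Proof.
rewrite dot4E; apply/eqP/eqP => [->|uv0]; first by rewrite mxE.
by rewrite [LHS]mx11_scalar uv0 raddf0.
Qed.

End Dot4.

Section Reflection.
Variables (K : fieldType) (x : 'rV[K]_4).

Fact gammaLin_is_linear : linear (gammaLin x).
Proof.
move=> k u v; rewrite /gammaLin dot4Dl dot4Zl scalerBr scalerA.
have -> : 2 * (k * dot4 u x + dot4 v x) / dot4 x x
          = k * (2 * dot4 u x / dot4 x x) + 2 * dot4 v x / dot4 x x by ring.
by rewrite scalerDl opprD addrACA.
Qed.

HB.instance Definition _ := GRing.isLinear.Build K _ _ _ (gammaLin x) gammaLin_is_linear.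

Lemma gammaLin_orth v : dot4 v x = 0 -> gammaLin x v = v.
Proof. by move=> vx; rewrite /gammaLin vx mulr0 mul0r scale0r subr0. Qed.

Hypothesis xx_neq0 : dot4 x x != 0.

Lemma gammaLin_self : gammaLin x x = - x.
Proof.
by rewrite /gammaLin -mulrA divff // mulr1 scalerDl scale1r opprD addrA subrr sub0r.
Qed.

Lemma gammaLinK : involutive (gammaLin x).
Proof.
by move=> v; rewrite {2}/gammaLin linearB linearZ /= gammaLin_self scalerN opprK subrK.
Qed.

End Reflection.

Section OrthogonalWitness.
Variable K : fieldType.

Lemma exists_orth_not_submx m p n (A : 'M[K]_(m, n)) (B : 'M_(p, n)) :
  ~~ (B <= A)%MS -> exists v : 'rV_n, v *m A^T = 0 /\ v *m B^T != 0.
Proof.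
rewrite submxE => nzB.
have [j nzBj] : exists j, col j (B *m cokermx A) != 0.
  apply/existsP; apply: contraR nzB => /existsPn nzBj.
  apply/eqP/matrixP => i j; have /negPn/eqP/matrixP/(_ i 0) := nzBj j.
  by rewrite !mxE.
exists (col j (cokermx A))^T; rewrite -!trmx_mul trmx_eq0 colE; split.
  by rewrite (mulmxA A) mulmx_coker mul0mx trmx0.
by rewrite mulmxA -colE.
Qed.

Lemma exists_orth_nonzero m n (A : 'M[K]_(m, n)) :
  (m < n)%N -> exists2 v : 'rV_n, v != 0 & v *m A^T = 0.
Proof.
move=> lt_mn; have [|v [Av0 nzv]] := exists_orth_not_submx (A := A) (B := 1%:M).
  by rewrite sub1mx /row_full neq_ltn (leq_ltn_trans (rank_leq_row A)).
by exists v => //; apply: contraNneq nzv => ->; rewrite mul0mx.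
Qed.

End OrthogonalWitness.

Section Projective.
Variable K : fieldType.
Implicit Types x y : 'rV[K]_4.

Lemma scaler_eq_nonproj x y s t :
  x != 0 -> y != 0 -> ~ projeq x y -> s *: x = t *: y -> s = 0 /\ t = 0.
Proof.
move=> nz_x nz_y nxy Exy; have [s0 | nz_s] := eqVneq s 0.
  move/esym/eqP: Exy; rewrite s0 scale0r scaler_eq0 (negbTE nz_y) orbF.
  by move/eqP.
have nz_t : t != 0.
  apply: contraNneq nz_x => t0; move/eqP: Exy.
  by rewrite t0 scale0r scaler_eq0 (negbTE nz_s).
case: nxy; exists (s^-1 * t); split; first by rewrite mulf_neq0 ?invr_eq0.
by rewrite -scalerA -Exy scalerA mulVf // scale1r.
Qed.

Lemma nonproj_addr_neq0 x y : ~ projeq x y -> x + y != 0.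
Proof.
move=> nxy; apply/negP; rewrite addr_eq0 => /eqP xNy; apply: nxy.
by exists (-1); rewrite scaleN1r oppr_eq0 oner_eq0.
Qed.

Lemma eigenvalue_eq_of_sum (f : {additive 'rV[K]_4 -> 'rV[K]_4}) x y kx ky k :
  x != 0 -> y != 0 -> ~ projeq x y ->
  f x = kx *: x -> f y = ky *: y -> f (x + y) = k *: (x + y) -> kx = ky.
Proof.
move=> nz_x nz_y nxy fx fy; rewrite raddfD fx fy => fxy.
have /(scaler_eq_nonproj nz_x nz_y nxy) [] : (kx - k) *: x = (k - ky) *: y.
  by apply/eqP; rewrite !scalerBl subr_eq addrAC eq_sym subr_eq addrC -scalerDr -fxy.
by move=> /eqP; rewrite subr_eq0 => /eqP-> /eqP; rewrite subr_eq0 => /eqP.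
Qed.

End Projective.

Section IsotropicEigen.
Variables (K : fieldType) (i : K).
Hypotheses (sqrtm1 : i ^+ 2 = -1) (two_neq0 : 2 != 0 :> K).

Definition isovec (p q : 'I_4) (s : K) : 'rV[K]_4 := delta_mx 0 p + s *: delta_mx 0 q.

Lemma isovecE p q s k : isovec p q s 0 k = (k == p)%:R + s * (k == q)%:R.
Proof. by rewrite !mxE. Qed.

Lemma dot4_isovec p q s v : dot4 (isovec p q s) v = v 0 p + s * v 0 q.
Proof. by rewrite dot4Dl dot4Zl !dot4_delta. Qed.

Lemma isovec_neq0 p q s : p != q -> isovec p q s != 0.
Proof.
move=> pq; apply/eqP => /rowP/(_ p)/eqP.
by rewrite isovecE mxE eqxx (negbTE pq) mulr0 addr0 oner_eq0.
Qed.

Lemma isovec_onQ p q s : p != q -> s ^+ 2 = -1 -> onQ (isovec p q s).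
Proof.
move=> pq s2; split; first exact: isovec_neq0.
rewrite dot4_isovec !isovecE !eqxx (negbTE pq) eq_sym (negbTE pq).
by rewrite mulr0 !addr0 add0r mulr1 -expr2 s2 subrr.
Qed.

Variable f : {linear 'rV[K]_4 -> 'rV[K]_4}.
Hypothesis f_isotropic : forall y, onQ y -> exists k, f y = k *: y.

Lemma eigenvalue_isovec_eq s s' ks ks' : s ^+ 2 = -1 -> s' ^+ 2 = -1 ->
  f (isovec 0 1 s) = ks *: isovec 0 1 s -> f (isovec 2 3 s') = ks' *: isovec 2 3 s' ->
  ks = ks'.
Proof.
move=> s2 s'2 fx fy.
have [nz_x xx] := isovec_onQ (isT : 0 != 1 :> 'I_4) s2.
have [nz_y yy] := isovec_onQ (isT : 2 != 3 :> 'I_4) s'2.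
have xy : dot4 (isovec 0 1 s) (isovec 2 3 s') = 0.
  by rewrite dot4_isovec !isovecE /= !(mulr0, addr0).
have nxy : ~ projeq (isovec 0 1 s) (isovec 2 3 s').
  by case=> k [_ /rowP/(_ 0)/eqP]; rewrite !mxE /= !(mulr0, addr0) oner_eq0.
have [k fxy] := f_isotropic (conj (nonproj_addr_neq0 nxy) (isotropicD xx yy xy)).
exact: eigenvalue_eq_of_sum nz_x nz_y nxy fx fy fxy.
Qed.

Lemma delta_eigen_of_isovec p q l : p != q ->
  f (isovec p q i) = l *: isovec p q i -> f (isovec p q (- i)) = l *: isovec p q (- i) ->
  f (delta_mx 0 p) = l *: delta_mx 0 p /\ f (delta_mx 0 q) = l *: delta_mx 0 q.
Proof.
move=> pq fx fy; have nz_i : i != 0.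
  by apply: contra_eq_neq sqrtm1 => ->; rewrite expr0n eq_sym oppr_eq0 oner_eq0.
have Ep : delta_mx 0 p = 2^-1 *: (isovec p q i + isovec p q (- i)).
  rewrite addrACA -scalerDl subrr scale0r addr0 -mulr2n -scaler_nat scalerA.
  by rewrite mulVf ?scale1r.
have Eq : delta_mx 0 q = (2 * i)^-1 *: (isovec p q i - isovec p q (- i)).
  rewrite opprD addrACA subrr add0r -scalerBl opprK -mulr2n -[i *+ 2]mulr_natl.
  by rewrite scalerA mulVf ?scale1r ?mulf_neq0.
rewrite Ep Eq !linearZ linearD linearB /= fx fy -scalerDr -scalerBr !scalerA.
by rewrite mulrC [(2 * i)^-1 * l]mulrC.
Qed.

Lemma isotropic_eigen_scalar : exists l, forall u, f u = l *: u.
Proof.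
have sqrtNm1 : (- i) ^+ 2 = -1 by rewrite sqrrN.
have [k1 f1] := f_isotropic (isovec_onQ (isT : 0 != 1 :> 'I_4) sqrtm1).
have [k2 f2] := f_isotropic (isovec_onQ (isT : 0 != 1 :> 'I_4) sqrtNm1).
have [k3 f3] := f_isotropic (isovec_onQ (isT : 2 != 3 :> 'I_4) sqrtm1).
have [k4 f4] := f_isotropic (isovec_onQ (isT : 2 != 3 :> 'I_4) sqrtNm1).
have k13 := eigenvalue_isovec_eq sqrtm1 sqrtm1 f1 f3.
have k14 := eigenvalue_isovec_eq sqrtm1 sqrtNm1 f1 f4.
have k23 := eigenvalue_isovec_eq sqrtNm1 sqrtm1 f2 f3.
rewrite -k13 in f3; rewrite -k14 in f4; rewrite k23 -k13 in f2.
have [f_0 f_1] := delta_eigen_of_isovec (isT : 0 != 1 :> 'I_4) f1 f2.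
have [f_2 f_3] := delta_eigen_of_isovec (isT : 2 != 3 :> 'I_4) f3 f4.
have f_delta k : f (delta_mx 0 k) = k1 *: delta_mx 0 k.
  have : [|| k == 0, k == 1, k == 2 | k == 3] by case: k => [[|[|[|[|]]]]].
  by case/or4P => /eqP->.
exists k1 => u; rewrite [u]row_sum_delta linear_sum scaler_sumr; apply: eq_bigr => k _.
by rewrite linearZ /= f_delta !scalerA mulrC.
Qed.

End IsotropicEigen.

Section SpanOfTwo.
Variable K : fieldType.
Implicit Types a b c : 'rV[K]_4.

Lemma exists_orth3 a b c :
  exists2 w, w != 0 & [/\ dot4 w a = 0, dot4 w b = 0 & dot4 w c = 0].
Proof.
have [w nz_w] := exists_orth_nonzero (col_mx (col_mx a b) c) isT.
rewrite !tr_col_mx !mul_mx_row => /eqP; rewrite !row_mx_eq0 !mulmx_tr_eq0.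
by case/andP=> /andP[/eqP wa /eqP wb] /eqP wc; exists w.
Qed.

Lemma submx_in_span2 a b c : (c <= col_mx a b)%MS -> in_span2 a b c.
Proof.
case/submxP=> D ->; rewrite -[D]hsubmxK mul_row_col.
rewrite [lsubmx D]mx11_scalar [rsubmx D]mx11_scalar !mul_scalar_mx.
by exists (lsubmx D 0 0), (rsubmx D 0 0).
Qed.

Lemma exists_orth2_not_submx a b c : ~~ (c <= col_mx a b)%MS ->
  exists v, [/\ dot4 v a = 0, dot4 v b = 0 & dot4 v c != 0].
Proof.
move=> /exists_orth_not_submx[v []].
rewrite tr_col_mx mul_mx_row => /eqP; rewrite row_mx_eq0 !mulmx_tr_eq0.
by case/andP=> /eqP va /eqP vb vc; exists v.
Qed.

End SpanOfTwo.

Section ThreeReflections.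
Variables (K : fieldType) (a b c : 'rV[K]_4).
Hypotheses (aa : dot4 a a != 0) (bb : dot4 b b != 0) (cc : dot4 c c != 0).

Local Notation T := (gammaLin a \o gammaLin b \o gammaLin c).

Lemma isotropic_eigen_of_commute :
  eqOnQ ((gammaLin c \o gammaLin a) \o (gammaLin b \o gammaLin c))
        ((gammaLin b \o gammaLin c) \o (gammaLin c \o gammaLin a)) ->
  forall y, onQ y -> exists k, (T \o T) y = k *: y.
Proof.
move=> hQ y /hQ [k [_ /= E]]; exists k.
by rewrite /= E !linearZ /= (gammaLinK cc) (gammaLinK bb) (gammaLinK aa).
Qed.

Lemma involutive_of_scalar l : (forall u, (T \o T) u = l *: u) -> involutive T.
Proof.
move=> Tl; have [w nz_w [wa wb wc]] := exists_orth3 a b c.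
have l1 : l = 1.
  have := Tl w; rewrite /= !gammaLin_orth // => /eqP.
  rewrite -subr_eq0 -{1}(scale1r w) -scalerBl scaler_eq0 (negbTE nz_w) orbF subr_eq0.
  by move/eqP.
by move=> u; have := Tl u; rewrite l1 scale1r.
Qed.

Hypothesis two_neq0 : 2 != 0 :> K.

Lemma gammaLin2_fix_of_involutive v : involutive T ->
  dot4 v a = 0 -> dot4 v b = 0 -> dot4 v c != 0 -> gammaLin a (gammaLin b c) = c.
Proof.
move=> Tinv va vb vc.
have Tv : T v = gammaLin c v.
  have := congr1 (gammaLin c \o gammaLin b \o gammaLin a) (Tinv v).
  rewrite /= (gammaLinK aa) (gammaLinK bb) (gammaLinK cc).
  by rewrite (gammaLin_orth va) (gammaLin_orth vb).
pose k := 2 * dot4 v c / dot4 c c; have nz_k : k != 0 by rewrite !mulf_neq0 ?invr_eq0.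
have gammaLin_cv : gammaLin c v = v - k *: c by [].
have gammaLin_v x w : dot4 v x = 0 -> gammaLin x (v - k *: w) = v - k *: gammaLin x w.
  by move=> vx; rewrite linearB linearZ /= gammaLin_orth.
move: Tv; rewrite /= gammaLin_cv !gammaLin_v //.
by move/addrI/oppr_inj/(scalerI nz_k).
Qed.

End ThreeReflections.

Lemma gammaLin_eq_orth (K : fieldType) (a b c : 'rV[K]_4) :
  a != 0 -> b != 0 -> ~ projeq a b -> dot4 a a != 0 -> dot4 b b != 0 -> 2 != 0 :> K ->
  gammaLin a c = gammaLin b c -> dot4 c a = 0 /\ dot4 c b = 0.
Proof.
move=> nz_a nz_b nab aa bb two.
move=> /addrI/oppr_inj/(scaler_eq_nonproj nz_a nz_b nab) [/eqP + /eqP].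
rewrite !mulf_eq0 !invr_eq0 (negbTE two) (negbTE aa) (negbTE bb) !orFb !orbF.
by move=> /eqP-> /eqP->.
Qed.

Unset Implicit Arguments.

Theorem lemma4p9 (K : closedFieldType) (charK0 : [pchar K] =i pred0)
  (a b c : 'rV[K]_4) :
  a != 0 -> b != 0 -> c != 0 ->
  dot4 a a != 0 -> dot4 b b != 0 -> dot4 c c != 0 ->
  ~ projeq a b -> dot4 a b != 0 ->
  eqOnQ ((gammaLin c \o gammaLin a) \o (gammaLin b \o gammaLin c))
        ((gammaLin b \o gammaLin c) \o (gammaLin c \o gammaLin a)) ->
  in_span2 a b c \/ in_perp2 a b c.
Proof.
move=> nz_a nz_b _ aa bb cc nab _ hQ.
have two_neq0 : 2 != 0 :> K by rewrite ((pcharf0P K).1 charK0 2).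
have [i sqrtm1] := imaginary_exists K.
have [l Tl] := isotropic_eigen_scalar sqrtm1 two_neq0
  (isotropic_eigen_of_commute aa bb cc hQ).
have Tinv := involutive_of_scalar Tl.
have [/submx_in_span2 | c_notin_ab] := boolP (c <= col_mx a b)%MS; first by left.
right; have [v [va vb vc]] := exists_orth2_not_submx c_notin_ab.
have fix_c := gammaLin2_fix_of_involutive aa bb cc two_neq0 Tinv va vb vc.
by apply: gammaLin_eq_orth => //; rewrite -{1}fix_c (gammaLinK aa).
Qed.
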